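(* Let $w\in\mathcal S_n$ and $a,b\in\mathrm R(w)$. Then $a$ and $b$ lie in the same commutation class if and only if $\Gamma(a,(x,y,z))=\Gamma(b,(x,y,z))$ for every triple $(x,y,z)\in\mathrm T_w$.
   Context: Permutations are in one-line notation. A word $a=a_1\cdots a_\ell$ with letters in $\{1,\dots,n-1\}$ acts on a word of length $n$ by successively swapping the entries in positions $a_j$ and $a_j+1$, $j=1,\dots,\ell$. $\mathrm R(w)$ is the set of reduced words of $w$ (words of length $\ell(w)$, the number of inversions of $w$, whose action on $12\cdots n$ yields $w$). For $a\in\mathrm R(w)$, each inversion $(p,q)$ of $w$ (values $p>q$ with $p$ left of $q$ in $w$) is created by exactly one step, and $P_a(p,q)$ denotes the index of that step. Two reduced words differ by a commutation if one is obtained from the other by replacing a factor $ij$ with $|i-j|\ge2$ by $ji$; the commutation class $[a]$ is the set of reduced words reachable from $a$ by sequences of commutations. $\mathrm T_w$ is the set of triples of values $(x,y,z)$ with $x<y<z$ such that $z,y,x$ appear in this order from left to right in $w$. For $a\in\mathrm R(w)$ and $(x,y,z)\in\mathrm T_w$, $\Gamma(a,(x,y,z))=1$ if $P_a(y,x)>P_a(z,y)$ and $\Gamma(a,(x,y,z))=0$ if $P_a(y,x)<P_a(z,y)$. *)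

From Stdlib Require Import Relations.
From mathcomp Require Import all_boot all_order all_fingroup.
Set Implicit Arguments. Unset Strict Implicit. Unset Printing Implicit Defensive.

(* One-line notation of w : 'S_n, with values 1..n (w maps 'I_n to 'I_n,
   value of position i is (w i).+1). *)
Definition oneline n (w : 'S_n) : seq nat := [seq (w i).+1 | i <- enum 'I_n].

Definition idword (n : nat) : seq nat := iota 1 n.

(* Swap the entries in (1-indexed) positions k and k+1. *)
Definition swap_at (s : seq nat) (k : nat) : seq nat :=
  [seq if i == k.-1 then nth 0 s k
       else if i == k then nth 0 s k.-1
       else nth 0 s i | i <- iota 0 (size s)].

Definition act (a : seq nat) (s : seq nat) : seq nat := foldl swap_at s a.

Definition ninv (s : seq nat) : nat :=
  \sum_(i < size s) \sum_(j < size s | i < j) (nth 0 s j < nth 0 s i).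

Definition reduced n (w : 'S_n) (a : seq nat) : bool :=
  [&& all (fun k => (0 < k) && (k < n)) a,
      size a == ninv (oneline w)
    & act a (idword n) == oneline w].

(* Step j+1 (0-indexed j) of a creates the inversion (p,q), p > q:
   before the step, q is at position a_(j+1) and p at position a_(j+1)+1. *)
Definition creates n (a : seq nat) (p q : nat) (j : nat) : bool :=
  let t := act (take j a) (idword n) in
  let k := nth 0 a j in
  (nth 0 t k.-1 == q) && (nth 0 t k == p).

(* P_a(p,q): the (1-indexed) index of the step creating the inversion (p,q). *)
Definition Pidx n (a : seq nat) (p q : nat) : nat :=
  (find (creates n a p q) (iota 0 (size a))).+1.

Definition inT n (w : 'S_n) (x y z : nat) : bool :=
  let s := oneline w in
  [&& x < y, y < z, x \in s, y \in s, z \in s,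
      index z s < index y s & index y s < index x s].

Definition Gamma n (a : seq nat) (x y z : nat) : nat :=
  (Pidx n a z y < Pidx n a y x : bool).

Definition comm_step (a b : seq nat) : Prop :=
  exists (u v : seq nat) (i j : nat),
    [|| i.+1 < j | j.+1 < i] /\ a = u ++ [:: i; j] ++ v /\ b = u ++ [:: j; i] ++ v.

Definition same_comm_class (a b : seq nat) : Prop :=
  clos_refl_trans (seq nat) comm_step a b.

(* Generalise reduced words to an arbitrary target arrangement s.  Along a
   reduced word every step creates exactly one inversion, which then persists,
   so (u,v) is an inversion after i steps iff P(u,v) <= i.  For a triple
   x < y < z of T_s, the step creating (z,x) makes z and x adjacent, so
   P(z,x) lies strictly between P(z,y) and P(y,x): Gamma fixes the relative
   order of the three inversions.
   A commutation only changes the arrangement reached between the two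
   commuted letters, and one checks that this never changes Gamma.
   Conversely, induct on the length.  The last letter k of a creates some
   inversion (p,q).  A step of b after the one creating (p,q) that touched p
   or q would create an inversion sharing a value with (p,q), created after
   (p,q) in b but before it in a, which the triple formed by the two
   inversions forbids.  So p and q stay at positions k-1, k, all later
   letters of b are far from k, and b commutes to a word ending in k; strip
   k from both words. *)

From Pilot Require Import Defs.
From Stdlib Require Import Relations.
From mathcomp Require Import all_boot all_order all_fingroup.
From mathcomp Require Import zify.
Set Implicit Arguments. Unset Strict Implicit. Unset Printing Implicit Defensive.
(* [act] would otherwise denote the group actions of fingroup. *)
Local Notation act := Defs.act.

Definition far (i j : nat) := (i.+1 < j) || (j.+1 < i).

Lemma size_swap_at s k : size (swap_at s k) = size s.
Proof. by rewrite /swap_at size_map size_iota. Qed.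

Lemma nth_swap_at s k i : i < size s ->
  nth 0 (swap_at s k) i = if i == k.-1 then nth 0 s k
       else if i == k then nth 0 s k.-1 else nth 0 s i.
Proof. by move=> hi; rewrite /swap_at (nth_map 0) ?size_iota // nth_iota. Qed.

Lemma split_adjacent s k : 0 < k < size s ->
  s = take k.-1 s ++ nth 0 s k.-1 :: nth 0 s k :: drop k.+1 s.
Proof.
move=> /andP[k0 ks].
rewrite -{1}(cat_take_drop k.-1 s) (drop_nth 0); last lia.
by rewrite prednK // (drop_nth 0).
Qed.

Lemma swap_atE s k : 0 < k < size s ->
  swap_at s k = take k.-1 s ++ nth 0 s k :: nth 0 s k.-1 :: drop k.+1 s.
Proof.
move=> /andP[k0 ks]; apply: (@eq_from_nth _ 0).
  rewrite size_swap_at size_cat /= size_take size_drop; case: ifP; lia.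
move=> i; rewrite size_swap_at => hi; rewrite nth_swap_at // nth_cat size_take.
rewrite (_ : k.-1 < size s = true); last lia.
case: (ltnP i k.-1) => h1.
  by rewrite nth_take // !ifF //; lia.
have [->|h2] := eqVneq i k.-1; first by rewrite subnn.
rewrite (_ : i - k.-1 = (i - k).+1) /=; last lia.
have [->|h3] := eqVneq i k; first by rewrite subnn.
by rewrite (_ : i - k = (i - k.+1).+1) /= ?nth_drop ?subnKC; lia.
Qed.

Lemma perm_swap_at s k : 0 < k < size s -> perm_eq (swap_at s k) s.
Proof.
move=> hk; rewrite swap_atE // [in X in perm_eq _ X](split_adjacent hk) perm_cat2l.
by rewrite -(cat1s (nth 0 s k)) -(cat1s (nth 0 s k.-1)) perm_catCA.
Qed.

Lemma swap_atK s k : 0 < k < size s -> swap_at (swap_at s k) k = s.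
Proof.
move=> /andP[k0 ks]; apply: (@eq_from_nth _ 0) => [|i]; rewrite !size_swap_at // => hi.
rewrite !nth_swap_at ?size_swap_at //; try lia.
by repeat case: eqP => //= ?; try lia; congr nth; lia.
Qed.

Lemma swap_atC s i j : 0 < i < size s -> 0 < j < size s -> far i j ->
  swap_at (swap_at s i) j = swap_at (swap_at s j) i.
Proof.
rewrite /far => /andP[i0 ilt] /andP[j0 jlt] f.
apply: (@eq_from_nth _ 0) => [|p]; rewrite !size_swap_at // => hp.
rewrite !nth_swap_at ?size_swap_at //; try lia.
by repeat case: eqP => //= ?; try lia.
Qed.

Lemma ninv_cons x s : ninv (x :: s) = count (fun y => y < x) s + ninv s.
Proof.
rewrite /ninv /= big_ord_recl /= big_mkcond big_ord_recl /= add0n.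
congr addn; first by elim: s => [|y s IH] /=; rewrite ?big_ord0 // big_ord_recl IH.
apply: eq_bigr => i _; rewrite big_mkcond big_ord_recl /= add0n [RHS]big_mkcond.
by apply: eq_bigr => j _; rewrite /bump /= !add1n ltnS.
Qed.

Lemma ninv_swap_adjacent u x y v :
  ninv (u ++ x :: y :: v) + (x < y) = ninv (u ++ y :: x :: v) + (y < x).
Proof.
elim: u => [|z u IH] /=; rewrite !ninv_cons /=; last by rewrite !count_cat /=; lia.
case: (ltngtP x y) => h /=; lia.
Qed.

Lemma ninv_swap_at s k : 0 < k < size s ->
  ninv s + (nth 0 s k.-1 < nth 0 s k) = ninv (swap_at s k) + (nth 0 s k < nth 0 s k.-1).
Proof. by move=> hk; rewrite swap_atE // {1}(split_adjacent hk) ninv_swap_adjacent. Qed.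

Lemma ninv_iota m n : ninv (iota m n) = 0.
Proof.
elim: n m => [|n IH] m; first by rewrite /ninv big_ord0.
rewrite /= ninv_cons IH addn0; apply/eqP; rewrite -leqn0 leqNgt -has_count.
by apply/hasP => -[y]; rewrite mem_iota; lia.
Qed.

Definition valid_word n (a : seq nat) := all (fun k => (0 < k) && (k < n)) a.

Lemma valid_word_cat n a b : valid_word n (a ++ b) = valid_word n a && valid_word n b.
Proof. exact: all_cat. Qed.

Lemma act_cat a b s : act (a ++ b) s = act b (act a s).
Proof. exact: foldl_cat. Qed.

Lemma act_rcons a k s : act (rcons a k) s = swap_at (act a s) k.
Proof. exact: foldl_rcons. Qed.

Lemma size_act a s : size (act a s) = size s.
Proof. by elim: a s => [|k a IH] s //=; rewrite IH size_swap_at. Qed.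

Lemma perm_act a s : valid_word (size s) a -> perm_eq (act a s) s.
Proof.
elim: a s => [|k a IH] s //= /andP[hk ha].
apply: perm_trans (IH _ _) (perm_swap_at hk); by rewrite size_swap_at.
Qed.

(* Each step changes [ninv] by one, so a word reaching [ninv s + size a]
   inversions must increase it at every step. *)
Lemma ninv_act_ascents a s : uniq s -> valid_word (size s) a ->
  ninv (act a s) <= ninv s + size a /\
  (ninv (act a s) = ninv s + size a -> forall j, j < size a ->
     let t := act (take j a) s in nth 0 t (nth 0 a j).-1 < nth 0 t (nth 0 a j)).
Proof.
elim: a s => [|k a IH] s us /=; first by split; [lia|].
move=> /andP[hk ha].
have us' : uniq (swap_at s k) by rewrite (perm_uniq (perm_swap_at hk)).
have ha' : valid_word (size (swap_at s k)) a by rewrite size_swap_at.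
have [IH1 IH2] := IH _ us' ha'.
have hsw := ninv_swap_at hk.
have hne : nth 0 s k.-1 != nth 0 s k.
  have /andP[k0 ks] := hk; rewrite nth_uniq ?(leq_ltn_trans (leq_pred k) ks) //; lia.
move: hne; case: (ltngtP (nth 0 s k.-1) (nth 0 s k)) => h //= _.
  split; first lia.
  by move=> heq [|j] hj //=; apply: IH2 => //; lia.
by split; [lia | move=> heq [|j] hj /=; lia].
Qed.

Definition before (s : seq nat) u v := index u s < index v s.

Lemma eq_nth_index (s : seq nat) u j : uniq s -> u \in s -> j < size s ->
  (u == nth 0 s j) = (index u s == j).
Proof.
move=> us su hj; apply/eqP/eqP => [->|<-]; first exact: index_uniq.
by rewrite nth_index.
Qed.

Lemma index_swap_at (s : seq nat) k u : uniq s -> 0 < k < size s -> u \in s ->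
  index u (swap_at s k) = if u == nth 0 s k.-1 then k
        else if u == nth 0 s k then k.-1 else index u s.
Proof.
move=> us hk su; have /andP[k0 ks] := hk.
have k1s : k.-1 < size s := leq_ltn_trans (leq_pred k) ks.
have us' : uniq (swap_at s k) by rewrite (perm_uniq (perm_swap_at hk)).
have e1 := eq_nth_index us su k1s; have e2 := eq_nth_index us su ks.
set i := (X in _ = X).
have isz : i < size s by rewrite /i; case: ifP => // _; case: ifP => // _; rewrite index_mem.
suff <- : nth 0 (swap_at s k) i = u by rewrite index_uniq ?size_swap_at.
rewrite nth_swap_at // /i.
have [->|n1] := eqVneq u (nth 0 s k.-1).
  by rewrite eqxx; case: eqP => [|_]; first lia.
have [->|n2] := eqVneq u (nth 0 s k); first by rewrite eqxx.
by rewrite -e1 (negbTE n1) -e2 (negbTE n2) nth_index.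
Qed.

Lemma before_swap_at (s : seq nat) k u v : uniq s -> 0 < k < size s ->
  nth 0 s k.-1 < nth 0 s k -> u \in s -> v \in s -> v < u ->
  before (swap_at s k) u v =
    before s u v || ((u == nth 0 s k) && (v == nth 0 s k.-1)).
Proof.
move=> us hk hlt su sv vu; have /andP[k0 ks] := hk.
have k1s : k.-1 < size s := leq_ltn_trans (leq_pred k) ks.
rewrite /before !index_swap_at //.
have eu1 := eq_nth_index us su k1s; have eu2 := eq_nth_index us su ks.
have ev1 := eq_nth_index us sv k1s; have ev2 := eq_nth_index us sv ks.
have huv : index u s != index v s.
  by apply: contraTneq vu => h; rewrite -(nth_index 0 su) h nth_index // ltnn.
case: (eqVneq u (nth 0 s k.-1)) eu1 => [e|ne] eu1;
case: (eqVneq u (nth 0 s k)) eu2 => [e'|ne'] eu2;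
case: (eqVneq v (nth 0 s k.-1)) ev1 => [f|nf] ev1;
case: (eqVneq v (nth 0 s k)) ev2 => [f'|nf'] ev2 /=;
  try (subst; lia).
all: move/eqP: eu1 => eu1; move/eqP: eu2 => eu2; move/eqP: ev1 => ev1; move/eqP: ev2 => ev2.
all: lia.
Qed.

(* [reduced w a] is [reduced_for n (oneline w) a]; the target arrangement is
   generalised so that the last letter can be stripped off in the induction. *)
Definition reduced_for n (s a : seq nat) :=
  [&& valid_word n a, size a == ninv s & act a (idword n) == s].

Definition state n (a : seq nat) j := act (take j a) (idword n).

Lemma index_idword n u : u \in idword n -> index u (idword n) = u.-1.
Proof.
rewrite /idword mem_iota => hu.
have {1}-> : u = nth 0 (iota 1 n) u.-1 by rewrite nth_iota; lia.
by rewrite index_uniq ?iota_uniq ?size_iota; lia.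
Qed.

Lemma before_state0 n a u v : u \in idword n -> v \in idword n -> v < u ->
  before (state n a 0) u v = false.
Proof.
move=> hu hv vu; rewrite /state take0 /before !index_idword //.
by move: hu hv; rewrite /idword !mem_iota => hu hv; apply/negbTE; lia.
Qed.

Lemma size_state n a j : size (state n a j) = n.
Proof. by rewrite /state size_act size_iota. Qed.

Lemma state_succ n a j : j < size a -> state n a j.+1 = swap_at (state n a j) (nth 0 a j).
Proof. by move=> hj; rewrite /state (take_nth 0 hj) act_rcons. Qed.

Section ValidWord.

Variables (n : nat) (a : seq nat).
Hypothesis va : valid_word n a.

Lemma valid_word_nth j : j < size a -> 0 < nth 0 a j < n.
Proof. by move: va => /all_nthP h; apply: h. Qed.

Lemma perm_state j : perm_eq (state n a j) (idword n).
Proof.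
apply: perm_act; rewrite /idword size_iota.
by move: va; rewrite -{1}(cat_take_drop j a) valid_word_cat => /andP[].
Qed.

Lemma state_uniq j : uniq (state n a j).
Proof. by rewrite (perm_uniq (perm_state j)) iota_uniq. Qed.

Lemma mem_state j u : (u \in state n a j) = (u \in idword n).
Proof. by rewrite (perm_mem (perm_state j)). Qed.

Lemma nth_state_idword j i : i < n -> nth 0 (state n a j) i \in idword n.
Proof. by move=> hi; rewrite -(mem_state j) mem_nth // size_state. Qed.

End ValidWord.

Lemma Pidx_le n a u v : Pidx n a u v <= (size a).+1.
Proof. by rewrite /Pidx ltnS -[leqRHS](size_iota 0) find_size. Qed.

Lemma Pidx_creates n a u v :
  Pidx n a u v <= size a -> creates n a u v (Pidx n a u v).-1.
Proof.
rewrite /Pidx => h.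
have hh : has (creates n a u v) (iota 0 (size a)) by rewrite has_find size_iota.
by have := nth_find 0 hh; rewrite nth_iota ?add0n // -ltnS.
Qed.

Section ReducedWord.

Variables (n : nat) (s a : seq nat).
Hypothesis ha : reduced_for n s a.

Lemma reduced_for_valid : valid_word n a.
Proof. by case/and3P: ha. Qed.

Lemma reduced_for_size : size a = ninv s.
Proof. by case/and3P: ha => _ /eqP. Qed.

Lemma state_size_word : state n a (size a) = s.
Proof. by rewrite /state take_size; case/and3P: ha => _ _ /eqP. Qed.

Lemma mem_reduced_for u : (u \in s) = (u \in idword n).
Proof. by rewrite -state_size_word (mem_state reduced_for_valid). Qed.

Lemma state_ascent j : j < size a ->
  nth 0 (state n a j) (nth 0 a j).-1 < nth 0 (state n a j) (nth 0 a j).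
Proof.
have hv : valid_word (size (idword n)) a by rewrite size_iota reduced_for_valid.
have [_] := ninv_act_ascents (iota_uniq 1 n) hv; apply.
by case/and3P: ha => _ /eqP -> /eqP ->; rewrite [ninv (idword n)]ninv_iota.
Qed.

Lemma before_state_succ j u v : j < size a ->
  u \in idword n -> v \in idword n -> v < u ->
  before (state n a j.+1) u v = before (state n a j) u v || creates n a u v j.
Proof.
move=> hj hu hv vu; have va := reduced_for_valid.
rewrite state_succ // before_swap_at ?(mem_state va) ?(state_uniq va) //.
- by rewrite /creates andbC (eq_sym u) (eq_sym v).
- by rewrite size_state valid_word_nth.
- exact: state_ascent.
Qed.

Lemma before_state_has i u v : i <= size a ->
  u \in idword n -> v \in idword n -> v < u ->
  before (state n a i) u v = has (creates n a u v) (iota 0 i).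
Proof.
move=> + hu hv vu; elim: i => [|i IH] hi; first by rewrite before_state0.
by rewrite before_state_succ // IH 1?ltnW // -addn1 iotaD cats1 has_rcons orbC.
Qed.

Lemma before_stateE i u v : i <= size a ->
  u \in idword n -> v \in idword n -> v < u ->
  before (state n a i) u v = (Pidx n a u v <= i).
Proof.
move=> hi hu hv vu; rewrite before_state_has // /Pidx.
by rewrite -(has_take_leq _ (_ : i <= size (iota 0 (size a)))) ?size_iota // take_iota (minn_idPl hi).
Qed.

Lemma Pidx_le_size u v : u \in idword n -> v \in idword n -> v < u ->
  (Pidx n a u v <= size a) = before s u v.
Proof. by move=> hu hv vu; rewrite -before_stateE // state_size_word. Qed.

Lemma Pidx_state j : j < size a ->
  Pidx n a (nth 0 (state n a j) (nth 0 a j)) (nth 0 (state n a j) (nth 0 a j).-1) = j.+1.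
Proof.
move=> hj; have va := reduced_for_valid.
have /andP[k0 kn] := valid_word_nth va hj.
set k := nth 0 a j; set t := state n a j.
have qp : nth 0 t k.-1 < nth 0 t k := state_ascent hj.
have ut : uniq t := state_uniq va j.
have hp : nth 0 t k \in idword n by apply: nth_state_idword.
have hq : nth 0 t k.-1 \in idword n by apply: nth_state_idword; lia.
have not_yet : ~~ before t (nth 0 t k) (nth 0 t k.-1).
  by rewrite /before !index_uniq ?size_state //; lia.
have created : before (state n a j.+1) (nth 0 t k) (nth 0 t k.-1).
  by rewrite before_state_succ // /creates -/t -/k !eqxx orbT.
rewrite (before_stateE (ltnW hj)) // in not_yet; rewrite before_stateE // in created.
by move: created not_yet; lia.
Qed.

(* The step creating (z,x) makes z and x adjacent; y lies on one side of them,
   so exactly one of (z,y), (y,x) is already present at that moment. *)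
Lemma Pidx_triple x y z : x \in idword n -> y \in idword n -> z \in idword n ->
  x < y -> y < z -> before s z x ->
  Pidx n a z y < Pidx n a z x < Pidx n a y x \/
  Pidx n a y x < Pidx n a z x < Pidx n a z y.
Proof.
move=> hx hy hz xy yz bzx; have va := reduced_for_valid.
have hP : Pidx n a z x <= size a by rewrite Pidx_le_size // (ltn_trans xy).
set c := (Pidx n a z x).-1.
have Pzx : Pidx n a z x = c.+1 by [].
have hc : c < size a by rewrite -ltnS -Pzx.
have := Pidx_creates hP; rewrite -/c /creates -/(state n a c).
set t := state n a c; set k := nth 0 a c => /andP[/eqP ex /eqP ez].
have /andP[k0 kn] := valid_word_nth va hc.
have ut : uniq t := state_uniq va c.
have ix : index x t = k.-1 by rewrite -ex index_uniq ?size_state //; lia.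
have iz : index z t = k by rewrite -ez index_uniq ?size_state.
have iy : index y t != k.-1 /\ index y t != k.
  have yt : y \in t by rewrite (mem_state va).
  by split; [apply: contraTneq xy | apply: contraTneq yz] => iy;
    rewrite -(nth_index 0 yt) iy ?ex ?ez ltnn.
have zy_c := before_stateE (ltnW hc) hz hy yz.
have yx_c := before_stateE (ltnW hc) hy hx xy.
have zy_c1 := before_stateE hc hz hy yz.
have yx_c1 := before_stateE hc hy hx xy.
rewrite before_state_succ // /creates -/t -/k ex ez (ltn_eqF xy) andFb orbF in zy_c1.
rewrite before_state_succ // /creates -/t -/k ex ez (gtn_eqF yz) andbF orbF in yx_c1.
rewrite /before -/t ix iz in zy_c yx_c zy_c1 yx_c1.
move: zy_c yx_c zy_c1 yx_c1; rewrite Pzx; lia.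
Qed.

End ReducedWord.

Definition triple_in (s : seq nat) (x y z : nat) : bool :=
  [&& x < y, y < z, x \in s, y \in s, z \in s,
      index z s < index y s & index y s < index x s].

Definition Gamma_agree n s a b :=
  forall x y z, triple_in s x y z -> Gamma n a x y z = Gamma n b x y z.

Section GammaAgree.

Variables (n : nat) (s a b : seq nat).
Hypotheses (ha : reduced_for n s a) (hb : reduced_for n s b).
Hypothesis hg : Gamma_agree n s a b.

Lemma Pidx_order_agree x y z :
  x \in idword n -> y \in idword n -> z \in idword n -> x < y -> y < z ->
  (Pidx n a z y < Pidx n a y x) = (Pidx n b z y < Pidx n b y x).
Proof.
move=> hx hy hz xy yz.
have sab : size a = size b by rewrite (reduced_for_size ha) (reduced_for_size hb).
have := Pidx_le n a z y; have := Pidx_le n a y x.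
have := Pidx_le n b z y; have := Pidx_le n b y x.
have := Pidx_le_size ha hz hy yz; have := Pidx_le_size ha hy hx xy.
have := Pidx_le_size hb hz hy yz; have := Pidx_le_size hb hy hx xy.
case bzy: (before s z y); case byx: (before s y x); try by move=> *; apply/idP/idP; lia.
move=> *; have := hg (x := x) (y := y) (z := z).
rewrite /triple_in xy yz !(mem_reduced_for ha) hx hy hz -[_ < _]/(before s z y) bzy.
by rewrite -[_ < _]/(before s y x) byx /Gamma => /(_ isT); case: (_ < _); case: (_ < _).
Qed.

Lemma Pidx_triple_agree x y z :
  x \in idword n -> y \in idword n -> z \in idword n ->
  x < y -> y < z -> before s z x ->
  (Pidx n a z y < Pidx n a z x < Pidx n a y x /\ Pidx n b z y < Pidx n b z x < Pidx n b y x) \/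
  (Pidx n a y x < Pidx n a z x < Pidx n a z y /\ Pidx n b y x < Pidx n b z x < Pidx n b z y).
Proof.
move=> hx hy hz xy yz bzx.
have := Pidx_order_agree hx hy hz xy yz.
by case: (Pidx_triple ha hx hy hz xy yz bzx); case: (Pidx_triple hb hx hy hz xy yz bzx); lia.
Qed.

(* Two inversions sharing a value belong to a common triple of [T_s]. *)
Lemma Pidx_shared_agree e1 e2 p q :
  e1 \in idword n -> e2 \in idword n -> p \in idword n -> q \in idword n ->
  e2 < e1 -> q < p -> before s e1 e2 -> before s p q ->
  (e1 != p) || (e2 != q) -> [|| e1 == p, e1 == q, e2 == p | e2 == q] ->
  Pidx n a e1 e2 < Pidx n a p q -> Pidx n b e1 e2 < Pidx n b p q.
Proof.
move=> h1 h2 hp hq e21 qp be bpq hne shared.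
have agree := Pidx_triple_agree.
case/or4P: shared => /eqP E; subst.
- rewrite eqxx /= in hne; case: (ltngtP e2 q) => c.
  + by have := agree _ _ _ h2 hq hp c qp be; lia.
  + by have := agree _ _ _ hq h2 hp c e21 bpq; lia.
  + by rewrite c eqxx in hne.
- have bt : before s p e2 by rewrite /before in be bpq *; lia.
  by have := agree _ _ _ h2 hq hp e21 qp bt; lia.
- have bt : before s e1 q by rewrite /before in be bpq *; lia.
  by have := agree _ _ _ hq hp h1 qp e21 bt; lia.
- rewrite eqxx orbF in hne; case: (ltngtP e1 p) => c.
  + by have := agree _ _ _ hq h1 hp e21 c bpq; lia.
  + by have := agree _ _ _ hq hp h1 qp c be; lia.
  + by rewrite c eqxx in hne.
Qed.

End GammaAgree.

Lemma Pidx_lt_witness n s a x y z : reduced_for n s a ->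
  x \in idword n -> y \in idword n -> z \in idword n -> x < y -> y < z ->
  Pidx n a z y < Pidx n a y x <->
  exists2 r, r <= size a & before (state n a r) z y && ~~ before (state n a r) y x.
Proof.
move=> ha hx hy hz xy yz; have := Pidx_le n a y x; split.
  by exists (Pidx n a z y); rewrite ?(before_stateE ha) //; lia.
by case=> r hr; rewrite !(before_stateE ha) //; lia.
Qed.

Section Commutation.

Variables (n : nat) (u v : seq nat) (i j : nat).
Hypothesis fij : far i j.
Let a := u ++ [:: i; j] ++ v.
Let b := u ++ [:: j; i] ++ v.

Let size_ab : size a = size b. Proof. by rewrite /a /b !size_cat. Qed.
Let size_a : size a = (size u).+2 + size v.
Proof. by rewrite /a !size_cat /=; lia. Qed.
Let hu : size u < size a. Proof. by rewrite size_a; lia. Qed.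
Let nth_a_i : nth 0 a (size u) = i. Proof. by rewrite /a nth_cat ltnn subnn. Qed.
Let nth_a_j : nth 0 a (size u).+1 = j.
Proof. by rewrite /a nth_cat ltnNge leqnSn /= subSn // subnn. Qed.
Let j_neq : j != i.-1 /\ j != i.
Proof. by move: fij; rewrite /far; split; apply/eqP; lia. Qed.

Lemma valid_word_comm : valid_word n a = valid_word n b.
Proof. by rewrite /a /b !valid_word_cat /valid_word /= !andbT [X in _ && (X && _)]andbC. Qed.

Lemma valid_word_comm_letters : valid_word n a -> 0 < i < n /\ 0 < j < n.
Proof. by rewrite /a !valid_word_cat /valid_word /= andbT => /andP[_ /andP[/andP[-> ->] _]]. Qed.

Lemma state_comm r : valid_word n a -> r != (size u).+1 -> state n a r = state n b r.
Proof.
move=> va hr; rewrite /state /a /b !take_cat; case: ifP => // hr1.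
have [->|hr2] := eqVneq r (size u); first by rewrite subnn.
have [i0 j0] := valid_word_comm_letters va.
rewrite (_ : r - size u = (r - size u - 2).+2) /=; last lia.
by rewrite !act_cat /= swap_atC ?size_act ?size_iota.
Qed.

Lemma reduced_for_comm s : reduced_for n s a -> reduced_for n s b.
Proof.
case/and3P=> va hs hact; rewrite /reduced_for -valid_word_comm va.
have e : state n b (size b) = state n a (size a).
  by rewrite -size_ab state_comm // size_a; lia.
by rewrite /state !take_size in e; rewrite -size_ab hs e.
Qed.

(* Letter [i] moves y to position i, which the far letter [j] leaves alone. *)
Lemma creates_comm_snd x y : valid_word n a ->
  nth 0 (state n a (size u)) i.-1 = y -> ~~ creates n a y x (size u).+1.
Proof.
move=> va ey; have [/andP[i0 iN] /andP[j0 jN]] := valid_word_comm_letters va.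
have [j_i1 j_i] := j_neq.
rewrite /creates -/(state n a _) nth_a_j (state_succ _ hu) nth_a_i.
apply/negP => /andP[_]; rewrite nth_swap_at ?size_state //.
have [e|_] := eqVneq j i.-1; first by rewrite e eqxx in j_i1.
have [e|_] := eqVneq j i; first by rewrite e eqxx in j_i.
rewrite -ey (nth_uniq 0 _ _ (state_uniq va _)) ?size_state ?(leq_ltn_trans (leq_pred i)) //.
exact/negP.
Qed.

(* Only the state after the two commuted letters differs; if the witness for
   [Gamma] sits there, the state before or after the pair serves for [b]. *)
Lemma Pidx_lt_comm s x y z : reduced_for n s a ->
  x \in idword n -> y \in idword n -> z \in idword n -> x < y -> y < z ->
  Pidx n a z y < Pidx n a y x -> Pidx n b z y < Pidx n b y x.
Proof.
move=> ha hx hy hz xy yz; have hb := reduced_for_comm ha.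
have va := reduced_for_valid ha.
rewrite (Pidx_lt_witness ha) // (Pidx_lt_witness hb) // -size_ab.
case=> r hr /andP[zy_r yx_r].
have [er|nr] := eqVneq r (size u).+1; last by exists r; rewrite // -state_comm // zy_r yx_r.
have hu1 : (size u).+1 < size a by rewrite size_a ltnS leq_addr.
subst r; move: zy_r yx_r; rewrite !(before_state_succ ha) // negb_or.
case/orP=> [zy_t | cr] /andP[yx_t _].
  exists (size u); first exact: ltnW.
  by rewrite -state_comm ?zy_t ?yx_t // neq_ltn ltnSn.
exists (size u).+2; first by rewrite size_a leq_addr.
rewrite -(state_comm va); last by rewrite neq_ltn ltnSn orbT.
have := cr; rewrite /creates -/(state n a _) nth_a_i => /andP[/eqP ey /eqP ez].
rewrite !(before_state_succ ha) // cr orbT (negbTE yx_t) /= negb_or creates_comm_snd //.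
by rewrite /creates -/(state n a _) nth_a_i ez (gtn_eqF yz) andbF.
Qed.

End Commutation.

Lemma far_sym i j : far i j = far j i.
Proof. exact: orbC. Qed.

Lemma comm_step_sym a b : comm_step a b -> comm_step b a.
Proof. by case=> u [v [i [j [f [-> ->]]]]]; exists u, v, j, i; rewrite -[_ || _]far_sym. Qed.

Lemma same_comm_class_sym a b : same_comm_class a b -> same_comm_class b a.
Proof.
elim=> {a b} [a b hab | a | a b c _ IH1 _ IH2].
- exact/rt_step/comm_step_sym.
- exact: rt_refl.
- exact: rt_trans IH2 IH1.
Qed.

Lemma same_comm_class_cat pre suf a b : same_comm_class a b ->
  same_comm_class (pre ++ a ++ suf) (pre ++ b ++ suf).
Proof.
elim=> {a b} [a b [u [v [i [j [f [-> ->]]]]]] | a | a b c _ IH1 _ IH2].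
- by apply: rt_step; exists (pre ++ u), (v ++ suf), i, j; rewrite !catA.
- exact: rt_refl.
- exact: rt_trans IH1 IH2.
Qed.

Lemma same_comm_class_move_end pre k w : all (far k) w ->
  same_comm_class (pre ++ k :: w) (pre ++ w ++ [:: k]).
Proof.
elim: w pre => [|d w IH] pre /=; first by move=> _; apply: rt_refl.
case/andP=> fkd /(IH (pre ++ [:: d])); rewrite -!catA /= => IHw.
by apply: rt_trans IHw; apply: rt_step; exists pre, w, k, d.
Qed.

Lemma comm_step_Gamma_agree n s a b : comm_step a b -> reduced_for n s a ->
  reduced_for n s b /\ Gamma_agree n s a b.
Proof.
case=> u [v [i [j [f [-> ->]]]]] ha; have hb := reduced_for_comm f ha.
split=> // x y z /and5P[xy yz hx hy /andP[hz _]].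
rewrite !(mem_reduced_for ha) in hx hy hz.
rewrite /Gamma; congr nat_of_bool; apply/idP/idP; first exact: (Pidx_lt_comm f ha).
by apply: (Pidx_lt_comm _ hb); rewrite // far_sym.
Qed.

Lemma same_comm_class_Gamma_agree n s a b : same_comm_class a b ->
  reduced_for n s a -> reduced_for n s b /\ Gamma_agree n s a b.
Proof.
elim=> {a b} [a b hab | a | a b c _ IH1 _ IH2] ha.
- exact: comm_step_Gamma_agree hab ha.
- by split=> // x y z.
- have [hb g1] := IH1 ha; have [hc g2] := IH2 hb.
  by split=> // x y z hT; rewrite g1 // g2.
Qed.

Lemma state_rcons n a k i : i <= size a -> state n (rcons a k) i = state n a i.
Proof. by move=> hi; rewrite /state -cats1 takel_cat. Qed.

Lemma Pidx_rcons n a k u v : has (creates n a u v) (iota 0 (size a)) ->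
  Pidx n (rcons a k) u v = Pidx n a u v.
Proof.
move=> h; rewrite /Pidx size_rcons -[(size a).+1]addn1 iotaD find_cat.
have e : {in iota 0 (size a), creates n (rcons a k) u v =1 creates n a u v}.
  move=> j; rewrite mem_iota /creates => /andP[_ hj].
  by rewrite -cats1 takel_cat 1?ltnW // nth_cat hj.
by rewrite (eq_in_has e) h (eq_in_find e).
Qed.

Section StripLast.

Variables (n : nat) (s a : seq nat) (k : nat).
Hypothesis ha : reduced_for n s (rcons a k).

Let size_lt : size a < size (rcons a k). Proof. by rewrite size_rcons. Qed.

Lemma last_letter_range : 0 < k < n.
Proof. by have := valid_word_nth (reduced_for_valid ha) size_lt; rewrite nth_rcons ltnn eqxx. Qed.

Lemma state_last : state n (rcons a k) (size a) = swap_at s k.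
Proof.
rewrite -(state_size_word ha) size_rcons state_succ // nth_rcons ltnn eqxx.
by rewrite swap_atK // size_state last_letter_range.
Qed.

Lemma reduced_for_rcons : reduced_for n (swap_at s k) a.
Proof.
apply/and3P; split.
- by move: (reduced_for_valid ha); rewrite -cats1 valid_word_cat => /andP[].
- rewrite -state_last; set t := state n (rcons a k) (size a).
  have hk : 0 < k < size t by rewrite size_state last_letter_range.
  have ht : swap_at t k = s.
    by rewrite /t state_last swap_atK // -(state_size_word ha) size_state last_letter_range.
  have asc := state_ascent ha size_lt; rewrite nth_rcons ltnn eqxx -/t in asc.
  have := ninv_swap_at hk; rewrite ht asc ltnNge ltnW // -(reduced_for_size ha).
  by rewrite size_rcons addn0 addn1 => /eqP; rewrite eqSS eq_sym.
- by rewrite -state_last state_rcons // /state take_size.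
Qed.

End StripLast.

Lemma triple_in_state_succ n s a j x y z : reduced_for n s a -> j < size a ->
  triple_in (state n a j) x y z -> triple_in (state n a j.+1) x y z.
Proof.
move=> ha hj /and5P[xy yz hx hy /and3P[hz zy yx]].
have va := reduced_for_valid ha.
rewrite !(mem_state va) in hx hy hz.
rewrite /triple_in !(mem_state va) xy yz hx hy hz.
have := before_state_succ ha hj hz hy yz; have := before_state_succ ha hj hy hx xy.
by rewrite /before => -> ->; rewrite zy yx.
Qed.

Lemma Gamma_rcons n s a k x y z : reduced_for n s (rcons a k) ->
  triple_in (swap_at s k) x y z -> Gamma n (rcons a k) x y z = Gamma n a x y z.
Proof.
move=> ha /and5P[xy yz hx hy /and3P[hz zy yx]]; have h0 := reduced_for_rcons ha.
rewrite !(mem_reduced_for h0) in hx hy hz.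
have created u v : u \in idword n -> v \in idword n -> v < u -> before (swap_at s k) u v ->
    Pidx n (rcons a k) u v = Pidx n a u v.
  move=> hu hv vu; rewrite -(state_size_word h0) (before_state_has h0) //; exact: Pidx_rcons.
by rewrite /Gamma !created.
Qed.

Lemma Gamma_agree_rcons n s a b k :
  reduced_for n s (rcons a k) -> reduced_for n s (rcons b k) ->
  Gamma_agree n s (rcons a k) (rcons b k) -> Gamma_agree n (swap_at s k) a b.
Proof.
move=> ha hb hg x y z hT; rewrite -(Gamma_rcons ha hT) -(Gamma_rcons hb hT); apply: hg.
have hsz : size a < size (rcons a k) by rewrite size_rcons.
have := triple_in_state_succ ha hsz.
by rewrite (state_last ha) -(size_rcons a k) (state_size_word ha); apply.
Qed.

Section LastLetter.

Variables (n : nat) (s a b : seq nat) (k : nat).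
Hypotheses (ha : reduced_for n s (rcons a k)) (hb : reduced_for n s b).
Hypothesis hg : Gamma_agree n s (rcons a k) b.

(* (p,q) is the inversion created by the last letter [k] of [a]; in [b] it is
   created at step [m], by the letter [c]. *)
Let t := state n (rcons a k) (size a).
Let p := nth 0 t k.
Let q := nth 0 t k.-1.
Let m := (Pidx n b p q).-1.
Let c := nth 0 b m.

Let vb : valid_word n b. Proof. exact: reduced_for_valid hb. Qed.
Let size_lt : size a < size (rcons a k). Proof. by rewrite size_rcons. Qed.
Let hk : 0 < k < n. Proof. exact: last_letter_range ha. Qed.
Let hp : p \in idword n.
Proof. by apply: (nth_state_idword (reduced_for_valid ha)); lia. Qed.
Let hq : q \in idword n.
Proof. by apply: (nth_state_idword (reduced_for_valid ha)); lia. Qed.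
Let qp : q < p.
Proof. by have := state_ascent ha size_lt; rewrite nth_rcons ltnn eqxx. Qed.
Let Pidx_a_pq : Pidx n (rcons a k) p q = (size a).+1.
Proof. by have := Pidx_state ha size_lt; rewrite nth_rcons ltnn eqxx. Qed.
Let before_pq : before s p q.
Proof. by rewrite -(Pidx_le_size ha) // Pidx_a_pq. Qed.
Let Pidx_b_pq : Pidx n b p q = m.+1. Proof. by []. Qed.
Let m_lt : m < size b.
Proof. by have := Pidx_le_size hb hp hq qp; rewrite before_pq Pidx_b_pq. Qed.

Lemma created_in_b : nth 0 (state n b m) c.-1 = q /\ nth 0 (state n b m) c = p.
Proof.
have hP : Pidx n b p q <= size b by rewrite Pidx_b_pq.
by have := Pidx_creates hP; rewrite /creates -/m -/(state n b m) -/c => /andP[/eqP -> /eqP ->].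
Qed.

(* Otherwise [a] and [b] would create the new inversion and (p,q) in opposite
   orders, although they share a value. *)
Lemma later_steps_avoid j : m < j -> j < size b ->
  let e1 := nth 0 (state n b j) (nth 0 b j) in
  let e2 := nth 0 (state n b j) (nth 0 b j).-1 in
  [/\ e1 != p, e1 != q, e2 != p & e2 != q].
Proof.
move=> mj jb e1 e2.
have /andP[d0 dn] := valid_word_nth vb jb.
have e21 : e2 < e1 := state_ascent hb jb.
have he1 : e1 \in idword n by apply: nth_state_idword.
have he2 : e2 \in idword n by apply: nth_state_idword; lia.
have Pbe : Pidx n b e1 e2 = j.+1 := Pidx_state hb jb.
have be : before s e1 e2 by rewrite -(Pidx_le_size hb) // Pbe.
have hne : (e1 != p) || (e2 != q).
  by rewrite -negb_and; apply: contraTN mj => /andP[/eqP E1 /eqP E2]; rewrite /m -E1 -E2 Pbe ltnn.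
have Pae : Pidx n (rcons a k) e1 e2 < Pidx n (rcons a k) p q.
  have le := Pidx_le_size ha he1 he2 e21; rewrite be in le.
  rewrite Pidx_a_pq ltn_neqAle -(size_rcons a k) le andbT; apply: contraTneq hne => Pae.
  move: (Pidx_creates le); rewrite Pae size_rcons /= /creates nth_rcons ltnn eqxx -/t.
  by case/andP=> /eqP <- /eqP <-; rewrite /p /q /t /state !eqxx.
have : ~~ [|| e1 == p, e1 == q, e2 == p | e2 == q].
  apply/negP => shared.
  have := Pidx_shared_agree ha hb hg he1 he2 hp hq e21 qp be before_pq hne shared Pae.
  by rewrite Pbe Pidx_b_pq ltnS ltnNge (ltnW mj).
by rewrite !negb_or => /and4P.
Qed.

Let c_range : 0 < c < n. Proof. by have := valid_word_nth vb m_lt. Qed.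

Lemma far_of_positions j : m < j -> j < size b ->
  nth 0 (state n b j) c.-1 = p -> nth 0 (state n b j) c = q -> far c (nth 0 b j).
Proof.
move=> mj jb P1 P2; have [A1 A2 A3 A4] := later_steps_avoid mj jb.
have /andP[d0 dn] := valid_word_nth vb jb; have /andP[c0 cn] := c_range.
set d := nth 0 b j in A1 A2 A3 A4 d0 dn *.
have n1 : c.-1 != d.-1 by apply: contraNneq A3 => E; rewrite -E P1.
have n2 : c.-1 != d by apply: contraNneq A1 => E; rewrite -E P1.
have n3 : c != d.-1 by apply: contraNneq A4 => E; rewrite -E P2.
have n4 : c != d by apply: contraNneq A2 => E; rewrite -E P2.
by rewrite /far; lia.
Qed.

Lemma positions_after j : m < j <= size b ->
  nth 0 (state n b j) c.-1 = p /\ nth 0 (state n b j) c = q.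
Proof.
have /andP[c0 cn] := c_range.
elim: j => [|j IH] /andP[mj jb]; first by rewrite ltn0 in mj.
rewrite state_succ // !nth_swap_at ?size_state //; try lia.
case: (eqVneq m j) => [<-|ne].
  have [Q P] := created_in_b; rewrite -/c eqxx P ifF ?eqxx //; apply/eqP; lia.
have mj' : m < j by lia.
have jb' : j < size b by lia.
have hj : m < j <= size b by rewrite mj' ltnW.
have [P1 P2] := IH hj.
have := far_of_positions mj' jb' P1 P2; rewrite /far; set d := nth 0 b j => fcd.
by rewrite !ifF ?P1 ?P2 //; apply/eqP; lia.
Qed.

Lemma later_letters_far j : m < j -> j < size b -> far c (nth 0 b j).
Proof.
move=> mj jb; have hj : m < j <= size b by rewrite mj ltnW.
have [P1 P2] := positions_after hj.
exact: far_of_positions.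
Qed.

Lemma last_letter_eq : c = k.
Proof.
have /andP[c0 cn] := c_range; have /andP[k0 kn] := hk.
have hend : m < size b <= size b by rewrite m_lt leqnn.
have [P1 _] := positions_after hend; rewrite (state_size_word hb) in P1.
have sn : size s = n by rewrite -(state_size_word hb) size_state.
have ts : swap_at t k = s by rewrite /t (state_last ha) swap_atK // sn hk.
have P2 : nth 0 s k.-1 = p by rewrite -ts nth_swap_at ?size_state ?eqxx //; lia.
have us : uniq s by rewrite -(state_size_word hb) (state_uniq vb).
by move/eqP: P1; rewrite -P2 nth_uniq ?sn //; lia.
Qed.

Lemma same_comm_class_last : exists b', same_comm_class b (rcons b' k).
Proof.
exists (take m b ++ drop m.+1 b).
have hall : all (far k) (drop m.+1 b).
  apply/(all_nthP 0) => i; rewrite size_drop => hi.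
  by rewrite nth_drop -last_letter_eq; apply: later_letters_far; lia.
have eb : b = take m b ++ k :: drop m.+1 b.
  by rewrite -last_letter_eq /c -(drop_nth 0 m_lt) cat_take_drop.
rewrite {1}eb -cats1 -catA; exact: same_comm_class_move_end.
Qed.

End LastLetter.

Theorem Gamma_agree_same_comm_class n s a b :
  reduced_for n s a -> reduced_for n s b -> Gamma_agree n s a b -> same_comm_class a b.
Proof.
elim/last_ind: a s b => [|a k IH] s b ha hb hg.
  have -> : b = [::] by apply/size0nil; rewrite (reduced_for_size hb) -(reduced_for_size ha).
  exact: rt_refl.
have [b' cc] := same_comm_class_last ha hb hg.
have [hb' gb] := same_comm_class_Gamma_agree cc hb.
have g : Gamma_agree n (swap_at s k) a b'.
  by apply: Gamma_agree_rcons ha hb' _ => x y z hT; rewrite hg // gb.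
have := IH _ _ (reduced_for_rcons ha) (reduced_for_rcons hb') g.
move/(same_comm_class_cat [::] [:: k]); rewrite /= !cats1 => cc'.
exact: rt_trans cc' (same_comm_class_sym cc).
Qed.

Theorem mainTheorem3 (n : nat) (w : 'S_n) (a b : seq nat) :
  reduced w a -> reduced w b ->
  (same_comm_class a b <->
   (forall x y z : nat, inT w x y z -> Gamma n a x y z = Gamma n b x y z)).
Proof.
move=> ha hb; split; first by move=> cc; case: (same_comm_class_Gamma_agree cc ha).
exact: Gamma_agree_same_comm_class.
Qed.
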